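(* Let $R$ be a ring with unity and involution $*$, let $a,v\in R$, and let $m,n$ be nonnegative integers with $m+n\geq 1$. Then (1) $a$ is left invertible if and only if $a$ is left dual $(1,1)$-core invertible; (2) $a$ is left dual pseudo core invertible if and only if $a^m$ is left dual $(a^k,a^n)$-core invertible for some positive integer $k$; (3) $a$ is left dual core invertible if and only if $a^m$ is left dual $(a,a^n)$-core invertible; (4) $a$ is left dual $v$-core invertible if and only if $v$ is left dual $(a,a)$-core invertible.
   Context: Here $a^0=1$. For $a,b,c\in R$, $a$ is left dual $(b,c)$-core invertible if there exists $x\in Rc$ such that $bxab=b$ and $(xab)^*=xab$. An element $a$ is left dual pseudo core invertible if there exist $x\in R$ and a positive integer $k$ such that $a^kxa=a^k$, $(xa)^*=xa$ and $x^2a=x$; it is left dual core invertible if there exists $x\in R$ with $axa=a$, $(xa)^*=xa$ and $x^2a=x$. For $a,v\in R$, $a$ is left dual $v$-core invertible if there exists $x\in R$ such that $axva=a$, $(xva)^*=xva$ and $x^2va=x$. *)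

From HB Require Import structures.
From mathcomp Require Import all_boot all_order all_algebra.
Set Implicit Arguments. Unset Strict Implicit. Unset Printing Implicit Defensive.
Import GRing.Theory.
Local Open Scope ring_scope.

Definition is_involution (R : pzRingType) (star : R -> R) : Prop :=
  [/\ forall x y : R, star (x + y) = star x + star y,
      forall x y : R, star (x * y) = star y * star x
    & forall x : R, star (star x) = x].

Definition left_invertible (R : pzRingType) (a : R) : Prop :=
  exists y : R, y * a = 1.

Definition left_dual_bc_core_inv (R : pzRingType) (star : R -> R) (a b c : R) : Prop :=
  exists x : R, (exists r : R, x = r * c) /\
    b * x * a * b = b /\ star (x * a * b) = x * a * b.

Definition left_dual_pseudo_core_inv (R : pzRingType) (star : R -> R) (a : R) : Prop :=
  exists (x : R) (k : nat), (0 < k)%N /\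
    a ^+ k * x * a = a ^+ k /\ star (x * a) = x * a /\ x ^+ 2 * a = x.

Definition left_dual_core_inv (R : pzRingType) (star : R -> R) (a : R) : Prop :=
  exists x : R, a * x * a = a /\ star (x * a) = x * a /\ x ^+ 2 * a = x.

Definition left_dual_v_core_inv (R : pzRingType) (star : R -> R) (a v : R) : Prop :=
  exists x : R, a * x * v * a = a /\ star (x * v * a) = x * v * a /\ x ^+ 2 * v * a = x.

From mathcomp Require Import all_boot all_algebra zify.
Set Implicit Arguments. Unset Strict Implicit. Unset Printing Implicit Defensive.
Import GRing.Theory.
Local Open Scope ring_scope.

(* From x^2 a = x one gets x^(j+1) a^(j+1) = x a.  Hence if x is a left dual
   pseudo core inverse of a of index k, then x^(m+k) is a left dual
   (a^k, a^n)-core inverse of a^m, because x^(m+k) a^m a^k = x a.  Conversely,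
   from such a y take x = y a^(m+k-1), so that x a = y a^m a^k; as y lies in
   R a^n and m + n >= 1, x lies in R a^k, and a^k (x a) = a^k then gives
   x (x a) = x.  Part (4) is the same argument with a in place of a^k, and
   part (1) only needs 1^* = 1. *)

Lemma involution_star1 (R : pzRingType) (star : R -> R) :
  is_involution star -> star 1 = 1.
Proof.
case=> _ starM starK.
have mulr_star1 (y : R) : y * star 1 = y.
  by rewrite -{2}(starK y) -[star y]mul1r starM starK.
by rewrite -[star 1]mul1r mulr_star1.
Qed.

Section ExprAbsorb.

Variables (R : pzRingType) (x a : R).
Hypothesis xxa : x ^+ 2 * a = x.

Lemma expr_absorb j : x ^+ j.+2 * a = x ^+ j.+1.
Proof. by rewrite -addn2 exprD -mulrA xxa -exprSr. Qed.

Lemma expr_absorbX n j : x ^+ (j.+1 + n) * a ^+ n = x ^+ j.+1.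
Proof.
elim: n j => [|n IHn] j; first by rewrite addn0 mulr1.
by rewrite exprS mulrA addnS addSn expr_absorb -addSn IHn.
Qed.

Lemma exprX_absorb j : x ^+ j.+1 * a ^+ j.+1 = x * a.
Proof.
elim: j => [|j IHj]; first by rewrite !expr1.
by rewrite [a ^+ j.+2]exprS mulrA expr_absorb.
Qed.

End ExprAbsorb.

Section PseudoCore.

Variables (R : pzRingType) (star : R -> R).

Definition left_dual_pseudo_core_inv_index (k : nat) (a : R) : Prop :=
  exists x : R, a ^+ k * x * a = a ^+ k /\ star (x * a) = x * a /\ x ^+ 2 * a = x.

Lemma left_dual_pseudo_core_invE (a : R) :
  left_dual_pseudo_core_inv star a <->
  exists k : nat, (0 < k)%N /\ left_dual_pseudo_core_inv_index k a.
Proof.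
split; first by case=> x [k [k_gt0 hx]]; exists k; split; last exists x.
by case=> k [k_gt0 [x hx]]; exists x, k.
Qed.

Lemma left_dual_core_invE (a : R) :
  left_dual_core_inv star a <-> left_dual_pseudo_core_inv_index 1 a.
Proof. by rewrite /left_dual_pseudo_core_inv_index expr1. Qed.

Lemma pseudo_core_inv_index_bc (a : R) (k m n : nat) : (0 < k)%N ->
  left_dual_pseudo_core_inv_index k a ->
  left_dual_bc_core_inv star (a ^+ m) (a ^+ k) (a ^+ n).
Proof.
case: k => // k _ [x [akxa [star_xa xxa]]].
have yaa (b : R) : b * x ^+ (m + k).+1 * a ^+ m * a ^+ k.+1 = b * x * a.
  by rewrite -!mulrA -exprD addnS exprX_absorb.
exists (x ^+ (m + k).+1); split.
  by exists (x ^+ ((m + k).+1 + n)); rewrite expr_absorbX.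
by rewrite yaa akxa -[x ^+ _]mul1r yaa mul1r.
Qed.

Lemma bc_pseudo_core_inv_index (a : R) (k m n : nat) :
  (0 < k)%N -> (1 <= m + n)%N ->
  left_dual_bc_core_inv star (a ^+ m) (a ^+ k) (a ^+ n) ->
  left_dual_pseudo_core_inv_index k a.
Proof.
case: k => // k _ mn_gt0 [y [[r ->] [ak_yak star_yak]]].
set x := r * a ^+ n * a ^+ (m + k).
have xa : x * a = r * a ^+ n * a ^+ m * a ^+ k.+1.
  by rewrite /x -!mulrA -exprSr -addnS -!exprD.
have x_mul : x = r * a ^+ (n + m).-1 * a ^+ k.+1.
  by rewrite /x -!mulrA -!exprD; congr (r * a ^+ _); lia.
rewrite !mulrA in ak_yak; exists x; split; first by rewrite -mulrA xa !mulrA.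
split; first by rewrite xa.
by rewrite expr2 -mulrA xa x_mul -!mulrA; congr (r * (_ * _)); rewrite !mulrA.
Qed.

End PseudoCore.

Lemma left_invertible_bc_core11 (R : pzRingType) (star : R -> R) (a : R) :
  is_involution star ->
  left_invertible a <-> left_dual_bc_core_inv star a 1 1.
Proof.
move=> star_inv; split=> [[y ya1] | [x [_ [xa1 _]]]].
  exists y; rewrite mul1r !mulr1 ya1 (involution_star1 star_inv).
  by split=> //; exists y; rewrite mulr1.
by exists x; rewrite mul1r !mulr1 in xa1.
Qed.

Lemma left_dual_v_core_inv_bc (R : pzRingType) (star : R -> R) (a v : R) :
  left_dual_v_core_inv star a v <-> left_dual_bc_core_inv star v a a.
Proof.
split=> [[x [axva [star_xva xxva]]] | [x [[r ->] [axva star_xva]]]].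
  by exists x; split=> //; exists (x ^+ 2 * v); rewrite xxva.
exists (r * a); split=> //; split=> //.
by rewrite expr2 -!mulrA; congr (r * _); rewrite !mulrA in axva *.
Qed.

Theorem theorem3p1 (R : pzRingType) (star : R -> R) (a v : R) (m n : nat) :
  is_involution star -> (1 <= m + n)%N ->
  (left_invertible a <-> left_dual_bc_core_inv star a 1 1) /\
  (left_dual_pseudo_core_inv star a <->
     exists k : nat, (0 < k)%N /\ left_dual_bc_core_inv star (a ^+ m) (a ^+ k) (a ^+ n)) /\
  (left_dual_core_inv star a <-> left_dual_bc_core_inv star (a ^+ m) a (a ^+ n)) /\
  (left_dual_v_core_inv star a v <-> left_dual_bc_core_inv star v a a).
Proof.
move=> star_inv mn_gt0.
have pseudo_bc k : (0 < k)%N -> left_dual_pseudo_core_inv_index star k a <->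
    left_dual_bc_core_inv star (a ^+ m) (a ^+ k) (a ^+ n).
  move=> k_gt0; split; first exact: pseudo_core_inv_index_bc.
  exact: bc_pseudo_core_inv_index.
split; first exact: left_invertible_bc_core11.
split.
  rewrite left_dual_pseudo_core_invE.
  by split=> -[k [k_gt0 hk]]; exists k; split=> //; apply/pseudo_bc.
split; last exact: left_dual_v_core_inv_bc.
by rewrite left_dual_core_invE -[in X in _ <-> X](expr1 a); apply: pseudo_bc.
Qed.
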